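(* Let $G=(V,E)$ be a graph, let $V_{cover}\subseteq V$ be a vertex cover of $G$, and let $G'$ be a core subgraph of $G$ formed using $V_{cover}$. If $M'$ is a $(1+\epsilon)$-MCM in $G'$, then $M'$ is also a $(1+\epsilon)$-MCM in $G$.
   Context: A vertex cover is a set of vertices containing at least one endpoint of every edge. Given $G$ and a vertex cover $V_{cover}$, a core subgraph $G'$ consists of: all edges of $G$ with both endpoints in $V_{cover}$; and, for each $v\in V_{cover}$, $|V_{cover}|+1$ edges from $v$ to vertices in $V\setminus V_{cover}$ (all such edges if $v$ has fewer), chosen arbitrarily in an unweighted graph (and of maximum weight in a weighted graph). A matching $M$ of a graph $H$ is a $(1+\epsilon)$-MCM if $|M|\ge\frac{1}{1+\epsilon}$ times the size of a maximum cardinality matching of $H$. *)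

From HB Require Import structures.
From mathcomp Require Import all_boot all_order all_algebra.
Set Implicit Arguments. Unset Strict Implicit. Unset Printing Implicit Defensive.
Import Order.TTheory GRing.Theory Num.Theory.

Section Graphs.
Variable V : finType.

Definition is_graph (E : {set {set V}}) : Prop :=
  forall e, e \in E -> #|e| = 2.

Definition is_vertex_cover (E : {set {set V}}) (C : {set V}) : Prop :=
  forall e, e \in E -> exists2 v, v \in e & v \in C.

Definition is_matching (E : {set {set V}}) (M : {set {set V}}) : Prop :=
  M \subset E /\
  forall e1 e2, e1 \in M -> e2 \in M -> e1 != e2 -> [disjoint e1 & e2].

Definition is_matchingb (E M : {set {set V}}) : bool :=
  (M \subset E) &&
  [forall e1 in M, forall e2 in M, (e1 != e2) ==> [disjoint e1 & e2]].

Definition mcm_size (E : {set {set V}}) : nat :=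
  \max_(M : {set {set V}} | is_matchingb E M) #|M|.

Definition out_edges (E : {set {set V}}) (C : {set V}) (v : V) : {set {set V}} :=
  [set e in E | (v \in e) && ~~ (e \subset C)].

Definition is_core_subgraph (E : {set {set V}}) (C : {set V})
    (E' : {set {set V}}) : Prop :=
  [/\ E' \subset E,
      (forall e, e \in E -> e \subset C -> e \in E'),
      (forall e, e \in E' -> (e \subset C) \/
                  exists2 v, v \in C & e \in out_edges E C v) &
      (forall v, v \in C ->
         #|out_edges E' C v| = minn #|C|.+1 #|out_edges E C v|)].

Definition is_approx_mcm (R : realFieldType) (eps : R)
    (E M : {set {set V}}) : Prop :=
  is_matching E M /\
  ((mcm_size E)%:R / (1 + eps) <= (#|M|%:R : R))%R.

End Graphs.

(* Any matching M of G can be moved into the core subgraph G' without losing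
   edges, so the maximum matchings of G and G' have the same size.  Take an
   edge e = {v, w} of M outside G'; as edges inside the cover are all kept,
   v is in the cover and w is not, and since e was dropped, v keeps exactly
   |C| + 1 edges to V \ C in G'.  Each of these meets at most one edge of
   M \ {e}: an edge of M meeting two of them would contain two vertices outside
   the cover.  As |M| <= |C|, one of them is free, and swapping it for e
   decreases the number of edges of M outside G'. *)

From mathcomp Require Import all_boot all_order all_algebra.
Import Order.TTheory GRing.Theory Num.Theory.
Set Implicit Arguments. Unset Strict Implicit.

Lemma leq_card_rel (T U : finType) (A : {set T}) (B : {set U}) (r : T -> U -> bool) :
    (forall x, x \in A -> exists2 y, y \in B & r x y) ->
    (forall x x' y, x \in A -> x' \in A -> y \in B -> r x y -> r x' y -> x = x') ->
  #|A| <= #|B|.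
Proof.
move=> r_total r_inj.
have [->|[x0 x0A]] := set_0Vmem A; first by rewrite cards0.
have [y0 _ _] := r_total x0 x0A.
pose h x := odflt y0 [pick y in B | r x y].
have hP x : x \in A -> h x \in B /\ r x (h x).
  move=> xA; rewrite /h; case: pickP => [y /andP[]//|noy] /=.
  by have [y yB rxy] := r_total x xA; have := noy y; rewrite yB rxy.
rewrite -(card_in_imset (f := h)); last first.
  move=> x x' xA x'A hxx'; have [hxB rx] := hP x xA; have [_ rx'] := hP x' x'A.
  by apply: (r_inj x x' (h x)) => //; rewrite hxx'.
by apply/subset_leq_card/subsetP => _ /imsetP[x xA ->]; case: (hP x xA).
Qed.

Lemma set2_of_card2 (T : finType) (f : {set T}) a b :
  #|f| = 2 -> a \in f -> b \in f -> a != b -> f = [set a; b].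
Proof.
move=> f2 af bf ab; apply/esym/eqP; rewrite eqEcard cards2 ab f2 leqnn andbT.
by apply/subsetP => x /set2P[]->.
Qed.

Section CoreSubgraph.
Variable V : finType.
Implicit Types (E M : {set {set V}}) (C : {set V}).

Lemma matchingP E M : reflect (is_matching E M) (is_matchingb E M).
Proof.
apply: (iffP andP) => [[sME /forall_inP disj]|[sME disj]]; split => //.
  by move=> e1 e2 e1M e2M; apply/implyP/(forall_inP (disj _ e1M)).
by apply/forall_inP => e1 e1M; apply/forall_inP => e2 e2M; apply/implyP/disj.
Qed.

Lemma matching_sub E E' M : E \subset E' -> is_matching E M -> is_matching E' M.
Proof. by move=> sEE' [sME disj]; split=> //; apply: subset_trans sEE'. Qed.

Lemma leq_card_matching_cover E C M :
  is_vertex_cover E C -> is_matching E M -> #|M| <= #|C|.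
Proof.
move=> cov [sME disj]; apply: (@leq_card_rel _ _ M C (fun e v => v \in e)).
  by move=> e eM; have [v ve vC] := cov e (subsetP sME _ eM); exists v.
move=> e e' v eM e'M _ ve ve'; apply/eqP; apply: contraT => ee'.
by rewrite (disjointFr (disj _ _ eM e'M ee') ve) in ve'.
Qed.

Lemma matching_swap E M e f :
    is_matching E M -> f \in E -> (forall g, g \in M :\ e -> [disjoint f & g]) ->
  is_matching E (f |: (M :\ e)).
Proof.
move=> [sME disj] fE f_free; split.
  by apply/subsetP => g /setU1P[->//|/setD1P[_ /(subsetP sME)]].
move=> g1 g2 /setU1P[->|g1M] /setU1P[->|g2M]; rewrite ?eqxx //.
- by move=> _; apply: f_free.
- by move=> _; rewrite disjoint_sym; apply: f_free.
- by apply: disj; [case/setD1P: g1M | case/setD1P: g2M].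
Qed.

Lemma out_edge_endpoint_notin E C v f w :
    is_graph E -> v \in C -> f \in out_edges E C v -> w \in f -> v != w ->
  f = [set v; w] /\ w \notin C.
Proof.
move=> graph vC /setIdP[fE /andP[vf fC]] wf vw.
have fvw := set2_of_card2 (graph f fE) vf wf vw.
split=> //; apply: contra fC => wC; rewrite fvw.
by apply/subsetP => x /set2P[]->.
Qed.

Variables (E : {set {set V}}) (C : {set V}) (E' : {set {set V}}).
Hypotheses (graph : is_graph E) (cover : is_vertex_cover E C).
Hypothesis core : is_core_subgraph E C E'.

Lemma core_out_edges_sub v : out_edges E' C v \subset out_edges E C v.
Proof.
case: core => sE'E _ _ _.
by apply/subsetP => f /setIdP[/(subsetP sE'E) fE fv]; rewrite inE fE.
Qed.

Lemma core_out_edges_full e v :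
  e \notin E' -> v \in C -> e \in out_edges E C v -> #|out_edges E' C v| = #|C|.+1.
Proof.
case: core => _ _ _ cnt eE' vC eout.
have lt : #|out_edges E' C v| < #|out_edges E C v|.
  apply: proper_card; rewrite properEneq core_out_edges_sub andbT.
  apply: contraNneq eE' => eq.
  by move: eout; rewrite -eq => /setIdP[].
by move: (cnt v vC) lt; rewrite /minn; case: ltnP => // _ ->; rewrite ltnn.
Qed.

(* The map sending an out-edge of v to the edge of M \ {e} it meets is
   injective: that edge avoids v, so it contains the other endpoint, which is
   outside the cover. *)
Lemma leq_card_out_edges_blocked M e v :
    is_matching E M -> e \in M -> v \in e -> v \in C ->
    (forall f, f \in out_edges E' C v -> exists2 g, g \in M :\ e & ~~ [disjoint f & g]) ->
  #|out_edges E' C v| <= #|M :\ e|.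
Proof.
move=> [sME disj] eM ve vC blocked.
apply: leq_card_rel blocked _ => f f' g fout f'out /setD1P[ge gM].
have vg : v \notin g by rewrite (disjointFr (disj _ _ eM gM _) ve) // eq_sym.
have endpoint h x : h \in out_edges E' C v -> x \in g -> x \in h ->
    h = [set v; x] /\ x \notin C.
  move=> hout xg xh.
  apply: out_edge_endpoint_notin (subsetP (core_out_edges_sub v) h hout) xh _ => //.
  by apply: contraNneq vg => ->.
case/pred0Pn => w /andP[wf wg]; case/pred0Pn => w' /andP[wf' wg'].
have [-> wC] := endpoint f w fout wg wf; have [-> w'C] := endpoint f' w' f'out wg' wf'.
have [-> // | ww'] := eqVneq w w'.
have gE := subsetP sME g gM.
have [x] := cover gE; rewrite (set2_of_card2 (graph gE) wg wg' ww').
by case/set2P=> ->; rewrite ?(negbTE wC) ?(negbTE w'C).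
Qed.

Lemma core_free_edge M e :
    is_matching E M -> e \in M -> e \notin E' ->
  exists2 f, f \in E' & forall g, g \in M :\ e -> [disjoint f & g].
Proof.
case: (core) => _ inC _ _ mM eM eE'.
have eE := subsetP mM.1 e eM.
have [v ve vC] := cover eE.
have eout : e \in out_edges E C v.
  by rewrite inE eE ve; apply: contra eE' => /(inC e eE).
have [free | blocked] := boolP [exists f in out_edges E' C v,
                                 [forall g in M :\ e, [disjoint f & g]]].
  have /exists_inP[f /setIdP[fE' _] /forall_inP f_free] := free.
  by exists f.
have le_out : #|out_edges E' C v| <= #|M :\ e|.
  apply: leq_card_out_edges_blocked mM eM ve vC _ => f fout.
  by have /forall_inPn[g gM fg] := exists_inPn blocked f fout; exists g.
move: le_out (leq_card_matching_cover cover mM).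
rewrite (cardsD1 e M) eM (core_out_edges_full eE' vC eout) add1n.
by move=> le1 /ltnW/(leq_trans le1); rewrite ltnn.
Qed.

Lemma matching_into_core M :
  is_matching E M -> exists2 M', is_matching E' M' & #|M'| = #|M|.
Proof.
case: (core) => sE'E _ _ _.
elim: {M}_.+1 {-2}M (ltnSn #|M :\: E'|) => // n IH M ltMn mM.
have [M_sub | [e /setDP[eM eE']]] := set_0Vmem (M :\: E').
  exists M => //; case: mM => _ disj; split=> //.
  by rewrite -setD_eq0 M_sub.
have [f fE' f_free] := core_free_edge mM eM eE'.
have fM : f \notin M :\ e.
  apply/negP => /f_free; rewrite -setI_eq0 setIid => /eqP f0.
  by have := graph (subsetP sE'E f fE'); rewrite f0 cards0.
pose M2 := f |: (M :\ e).
have mM2 : is_matching E M2 := matching_swap mM (subsetP sE'E f fE') f_free.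
have ltM2 : #|M2 :\: E'| < #|M :\: E'|.
  apply: proper_card; rewrite properE; apply/andP; split.
    apply/subsetP => g /setDP[/setU1P[gf|/setD1P[_ gM]] gE']; last by rewrite inE gE' gM.
    by rewrite gf fE' in gE'.
  apply/subsetPn; exists e; first by rewrite inE eE' eM.
  by rewrite !inE eE' eqxx /= orbF; apply: contraNneq eE' => ->.
have [M' mM' cardM'] := IH M2 (leq_trans ltM2 ltMn) mM2.
by exists M' => //; rewrite cardM' cardsU1 fM (cardsD1 e M) eM.
Qed.

Lemma leq_mcm_size_core : (mcm_size E <= mcm_size E')%N.
Proof.
apply/bigmax_leqP => M /matchingP/matching_into_core[M' mM' <-].
exact/leq_bigmax_cond/matchingP.
Qed.

End CoreSubgraph.

Local Open Scope ring_scope.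

Theorem lemma4 (R : realFieldType) (eps : R) (V : finType)
    (E : {set {set V}}) (C : {set V}) (E' M' : {set {set V}}) :
  0 < eps ->
  is_graph E ->
  is_vertex_cover E C ->
  is_core_subgraph E C E' ->
  is_approx_mcm eps E' M' ->
  is_approx_mcm eps E M'.
Proof.
move=> eps_gt0 graph cover core [mM' approx].
have [sE'E _ _ _] := core.
split; first exact: matching_sub sE'E mM'.
apply: le_trans approx; apply: ler_wpM2r.
  by rewrite invr_ge0 addr_ge0 // ltW.
by rewrite ler_nat (leq_mcm_size_core graph cover core).
Qed.
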